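(* For every integer $n\geq 3$ there exists a number $m=f(n)$ such that the following holds for every positive integer $p$: if a graph $G$ contains a subgraph $C$ isomorphic to $C_{p,m}$ and three pairwise edge-disjoint trees $T_a,T_b,T_c$, each of which contains every vertex of $C$ and is edge-disjoint from $C$, then $C\cup T_a\cup T_b\cup T_c$ contains $C_{p+1,n}$ as an immersion.
   Context: All graphs are finite and loopless but may have parallel edges. $C_{t,r}$ denotes the graph obtained from a cycle on $r$ vertices by replacing each edge by $t$ parallel edges. Lifting a pair of adjacent edges $uv,vw$ means deleting them and adding a new edge $uw$ (if $u=w$ the loop is deleted). A graph $H$ is an immersion of $G$ if a graph isomorphic to $H$ can be obtained from a subgraph of $G$ by repeatedly lifting pairs of edges; equivalently, there is an injective map $V(H)\to V(G)$ and pairwise edge-disjoint paths of $G$ joining the images of the ends of each edge of $H$. *)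

From mathcomp Require Import all_boot.
Set Implicit Arguments. Unset Strict Implicit. Unset Printing Implicit Defensive.

Section MultiGraph.
Variables (V E : finType) (src dst : E -> V).

Definition joins (e : E) (x y : V) : bool :=
  ((src e == x) && (dst e == y)) || ((src e == y) && (dst e == x)).

Definition loopless : Prop := forall e : E, src e != dst e.

Fixpoint is_walk (x y : V) (s : seq (E * V)) : bool :=
  match s with
  | [::] => x == y
  | (e, v) :: s' => joins e x v && is_walk v y s'
  end.

Definition is_path_in (S : {set E}) (x y : V) (s : seq (E * V)) : bool :=
  [&& is_walk x y s, uniq (x :: map snd s) & all (fun st => st.1 \in S) s].

(* (phi, EC) is a subgraph isomorphic to C_{t,r} (r >= 3): phi injectively
   maps the cycle vertices 0..r-1, EC consists of edges joining consecutive
   cycle vertices phi i, phi (i+1 mod r), with exactly t such edges per pair. *)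
Definition is_Ctr_copy (t r : nat) (phi : 'I_r -> V) (EC : {set E}) : Prop :=
  [/\ injective phi,
      (forall e, e \in EC -> exists i : 'I_r, joins e (phi i) (phi (ordS i))) &
      (forall i : 'I_r, #|[set e in EC | joins e (phi i) (phi (ordS i))]| = t)].

Definition sub_adj (VT : {set V}) (ET : {set E}) : rel V :=
  fun x y => [&& x \in VT, y \in VT & [exists e in ET, joins e x y]].

Definition sub_connected (VT : {set V}) (ET : {set E}) : Prop :=
  forall x y, x \in VT -> y \in VT -> connect (sub_adj VT ET) x y.

(* (VT, ET) is a subgraph which is a tree: nonempty, connected, and
   minimally connected (every edge is a bridge), i.e. connected and acyclic. *)
Definition is_tree (VT : {set V}) (ET : {set E}) : Prop :=
  [/\ VT != set0,
      (forall e, e \in ET -> src e \in VT /\ dst e \in VT),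
      sub_connected VT ET &
      (forall e, e \in ET -> ~ sub_connected VT (ET :\ e))].

(* C_{t,r} is an immersion of the subgraph with edge set S: an injective map
   of the vertices of C_{t,r} and pairwise edge-disjoint paths in S joining
   the images of the ends of each edge (i,k) (the k-th parallel copy of the
   edge between i and i+1 mod r). *)
Definition immerses_Ctr (t r : nat) (S : {set E}) : Prop :=
  exists (phi : 'I_r -> V) (P : 'I_r * 'I_t -> seq (E * V)),
    [/\ injective phi,
        (forall h : 'I_r * 'I_t, is_path_in S (phi h.1) (phi (ordS h.1)) (P h)) &
        (forall h1 h2 : 'I_r * 'I_t, h1 != h2 ->
           forall e, e \in map fst (P h1) -> e \notin map fst (P h2))].

End MultiGraph.

(* Cutting a tree T at one of its edges e splits the cycle vertices phi i into two sides; the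
   sets cut e of indices separated by e from a fixed index r0 form a laminar family.  A
   Ramsey-type argument for laminar families of subsets of an ordered set yields indices
   w_0 < ... < w_(n-1) on which every cut of T_a and every cut of T_b traces an up-set, a
   down-set, or at most one index.  Such a cut cannot separate both w_j from w_(j+1) and
   w_k from w_(k+1) when j + 1 < k, so the T_a-paths for even j, the T_b-paths for odd j and a
   T_c-path from w_(n-1) back to w_0 are pairwise edge-disjoint.  Together with the p parallel
   arcs of C between consecutive w_j they give p + 1 edge-disjoint paths between consecutive
   branch vertices, an immersion of C_(p+1,n). *)

From Pilot Require Import Defs.
From mathcomp Require Import all_boot zify.
Set Implicit Arguments. Unset Strict Implicit. Unset Printing Implicit Defensive.

Lemma val_ordS n (j : 'I_n) : val (ordS j) = if j.+1 < n then j.+1 else 0.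
Proof.
rewrite /=; case: ifP => [lt_jn | /negbT]; first by rewrite modn_small.
by rewrite -leqNgt => le_nj; rewrite (@anti_leq j.+1 n) ?modnn // le_nj ltn_ord.
Qed.

Lemma eq_modn_window m s L t t' : L < m -> s <= t <= s + L -> s <= t' <= s + L ->
  t = t' %[mod m] -> t = t'.
Proof.
move=> Lm ht ht' tt'; wlog le_tt' : t t' ht ht' tt' / t <= t'.
  by move=> W; case: (leqP t t') => [|/ltnW] h; [apply: W | apply/esym/W].
have : m %| t' - t by rewrite -eqn_mod_dvd // tt'.
by case: (posnP (t' - t)) => [| /dvdn_leq le_m /le_m]; lia.
Qed.


Definition laminar (T : finType) (F : {set {set T}}) :=
  {in F &, forall A B : {set T}, [|| A \subset B, B \subset A | [disjoint A & B]]}.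

Section LaminarRamsey.
Variable m : nat.
Implicit Types (D S X Y : {set 'I_m}) (r : rel 'I_m) (h x y : 'I_m).

Definition upset_on r D Y := {in Y &, forall x y, r x y -> x \in D -> y \in D}.

Definition traces_upsets r (F : {set {set 'I_m}}) Y :=
  forall D, D \in F -> upset_on r D Y \/ #|D :&: Y| <= 1.

Definition monotone_traces (F : {set {set 'I_m}}) Y :=
  traces_upsets [rel x y : 'I_m | x < y] F Y \/ traces_upsets [rel x y : 'I_m | y < x] F Y.

Lemma traces_upsets_sub r F Y Y' :
  Y' \subset Y -> traces_upsets r F Y -> traces_upsets r F Y'.
Proof.
move=> sY'Y upY D DF; case: (upY D DF) => [up | small].
  by left=> x y /(subsetP sY'Y) xY /(subsetP sY'Y) yY; apply: up.
by right; apply: leq_trans small; apply/subset_leq_card/setIS.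
Qed.

Lemma monotone_traces_sub F Y Y' :
  Y' \subset Y -> monotone_traces F Y -> monotone_traces F Y'.
Proof. by move=> sY'Y [] upY; [left | right]; apply: traces_upsets_sub upY. Qed.

Lemma monotone_traces_cut F Y D x y z u : monotone_traces F Y -> D \in F ->
  x \in Y -> y \in Y -> z \in Y -> u \in Y -> x < y -> y < z -> z < u ->
  (x \in D) != (y \in D) -> (z \in D) != (u \in D) -> False.
Proof.
move=> monoY DF xY yY zY uY xy yz zu cut_xy cut_zu.
have not_small : 1 < #|D :&: Y|.
  have [a [aD aY ay]] : exists a, [/\ a \in D, a \in Y & a <= y].
    have [xD|xD] := boolP (x \in D); first by exists x; split=> //; apply: ltnW.
    by exists y; split=> //; move: cut_xy; rewrite (negbTE xD); case: (y \in D).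
  have [b [bD bY zb]] : exists b, [/\ b \in D, b \in Y & z <= b].
    have [zD|zD] := boolP (z \in D); first by exists z.
    by exists u; split=> //; [move: cut_zu; rewrite (negbTE zD); case: (u \in D) | apply: ltnW].
  apply/card_gt1P; exists a, b; rewrite !inE aD bD aY bY -(inj_eq val_inj) neq_ltn.
  by rewrite (leq_ltn_trans ay (leq_trans yz zb)).
case: monoY => /(_ D DF) [up | small]; try by rewrite ltnNge small in not_small.
- have /implyP i1 := up x y xY yY xy; have /implyP i2 := up y z yY zY yz.
  have /implyP i3 := up z u zY uY zu.
  by move: cut_xy cut_zu i1 i2 i3; do 4 case: (_ \in D).
- have /implyP i1 := up y x yY xY xy; have /implyP i2 := up z y zY yY yz.
  have /implyP i3 := up u z uY zY zu.
  by move: cut_xy cut_zu i1 i2 i3; do 4 case: (_ \in D).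
Qed.

Variable F : {set {set 'I_m}}.
Hypothesis laminarF : laminar F.

Definition traces_at X h := [set D :&: X | D in [set D in F | (h \in D) && ~~ (X \subset D)]].

Definition max_trace X h : {set 'I_m} :=
  if [pick A in traces_at X h] is Some A then [arg max_(B > A in traces_at X h) #|B|]
  else [set h].

Lemma traces_atP X h S : reflect
  (exists2 D, D \in F & [/\ h \in D, ~~ (X \subset D) & S = D :&: X]) (S \in traces_at X h).
Proof.
apply: (iffP imsetP) => [[D] | [D DF [hD XD ->]]].
  by rewrite inE => /and3P[DF hD XD] ->; exists D.
by exists D; rewrite // inE DF hD XD.
Qed.

Lemma max_traceP X h : (max_trace X h = [set h] /\ traces_at X h = set0) \/
  (max_trace X h \in traces_at X h /\ forall S, S \in traces_at X h -> #|S| <= #|max_trace X h|).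
Proof.
rewrite /max_trace; case: pickP => [A AX | none]; first by right; case: arg_maxnP.
by left; split=> //; apply/setP=> A; rewrite inE none.
Qed.

Lemma max_trace_id X h : h \in X -> h \in max_trace X h.
Proof.
move=> hX; case: (max_traceP X h) => [[-> _] | [/traces_atP[D _ [hD _ ->]] _]].
  exact: set11.
by rewrite inE hD.
Qed.

Lemma max_trace_subset X h : h \in X -> max_trace X h \subset X.
Proof.
move=> hX; case: (max_traceP X h) => [[-> _] | [/traces_atP[D _ [_ _ ->]] _]].
  by rewrite sub1set.
exact: subsetIr.
Qed.

Lemma trace_sub_max_trace X h D : D \in F -> h \in D -> ~~ (X \subset D) -> h \in X ->
  D :&: X \subset max_trace X h.
Proof.
move=> DF hD XD hX.
have DX : D :&: X \in traces_at X h by apply/traces_atP; exists D.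
case: (max_traceP X h) => [[_ none] | [/traces_atP[D' D'F [hD' _ ->]] maxD']].
  by rewrite none inE in DX.
have := maxD' _ DX; case/or3P: (laminarF DF D'F) => [sDD' | sD'D | dis] le_card.
- exact: setSI.
- suff -> : D' :&: X = D :&: X by [].
  by apply/eqP; rewrite eqEcard setSI.
- by rewrite (disjointFr dis hD) in hD'.
Qed.

Lemma max_trace_disjoint X y z : y \in X -> z \in X -> z \notin max_trace X y ->
  [disjoint max_trace X z & max_trace X y].
Proof.
move=> yX zX zUy; rewrite -setI_eq0; apply/set0Pn => -[v]; rewrite inE => /andP[vUz vUy].
have [[Uz _] | [/traces_atP[Dz DzF [zDz XDz Uz]] _]] := max_traceP X z.
  move: vUz; rewrite Uz inE => /eqP vz; by rewrite -vz vUy in zUy.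
move: vUz; rewrite Uz inE => /andP[vDz _].
have [[Uy _] | [/traces_atP[Dy DyF [yDy _ Uy]] _]] := max_traceP X y.
  move: vUy; rewrite Uy inE => /eqP vy; rewrite vy in vDz.
  have := subsetP (trace_sub_max_trace DzF vDz XDz yX) z.
  by rewrite inE zDz zX (negbTE zUy) => /(_ isT).
move: vUy; rewrite Uy inE => /andP[vDy _].
move: zUy; rewrite Uy inE zX andbT.
case/or3P: (laminarF DzF DyF) => [sDzDy | sDyDz | dis].
- by rewrite (subsetP sDzDy _ zDz).
- have := subsetP (trace_sub_max_trace DzF (subsetP sDyDz _ yDy) XDz yX) z.
  by rewrite Uy !inE zDz zX => /(_ isT) /andP[->].
- by rewrite (disjointFr dis vDz) in vDy.
Qed.

Lemma exists_small_max_trace X x0 : x0 \in X ->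
  exists2 h, h \in X & 2 * #|max_trace X h| <= #|X| + 1.
Proof.
move=> x0X; have X_gt0 : 0 < #|X| by apply/card_gt0P; exists x0.
have [[Ux0 _] | [/traces_atP[D _ [_ XD Ux0]] _]] := max_traceP X x0.
  by exists x0; rewrite // Ux0 cards1; lia.
have [small | big] := leqP (2 * #|max_trace X x0|) (#|X| + 1); first by exists x0.
have [z zX zD] := subsetPn XD.
have zUx0 : z \notin max_trace X x0 by rewrite Ux0 inE (negbTE zD).
exists z => //.
have : max_trace X z :|: max_trace X x0 \subset X by rewrite subUset !max_trace_subset.
move/subset_leq_card; rewrite cardsU.
by rewrite (disjoint_setI0 (max_trace_disjoint x0X zX zUx0)) cards0; lia.
Qed.

Lemma traces_upsets_grow r X h Y k : (forall x y, r x y -> ~~ r y x) -> h \in X ->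
  Y \subset [set y in X :\: max_trace X h | r h y] -> traces_upsets r F Y -> k <= #|Y| ->
  exists2 Y' : {set 'I_m}, Y' \subset X & traces_upsets r F Y' /\ k.+1 <= #|Y'|.
Proof.
move=> asym_r hX sYW upY kY.
have YX y : y \in Y -> [/\ y \in X, y \notin max_trace X h & r h y].
  by move/(subsetP sYW); rewrite !inE => /andP[/andP[-> ->] ->].
have hY : h \notin Y by apply/negP => /YX[_ /negP[]]; apply: max_trace_id.
exists (h |: Y); last split; last by rewrite cardsU1 hY.
  by rewrite subUset sub1set hX; apply/subsetP => y /YX[].
move=> D DF; have [XD | XD] := boolP (X \subset D).
  left=> x y _ /setU1P[-> | /YX[yX _ _]] _ _; exact: subsetP XD _ _.
have [hD | hD] := boolP (h \in D).
  right; suff -> : D :&: (h |: Y) = [set h] by rewrite cards1.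
  apply/setP=> x; rewrite !inE; case: (eqVneq x h) => [-> | xh] /=; first by rewrite hD.
  apply/negP => /andP[xD /YX[xX /negP xU _]]; apply: xU.
  by apply: (subsetP (trace_sub_max_trace DF hD XD hX)); rewrite inE xD.
case: (upY D DF) => [up | small]; [left | right].
  move=> x y /setU1P[-> | xY] /setU1P[-> | yY] rxy xD; try by rewrite xD in hD.
    by have [_ _ /asym_r] := YX x xY; rewrite rxy.
  exact: up xY yY rxy xD.
apply: leq_trans small; apply/subset_leq_card/subsetP => x.
by rewrite !inE => /andP[xD /orP[/eqP xh | ->]]; [rewrite -xh xD in hD | rewrite xD].
Qed.

Lemma card_split_max_trace X h : h \in X ->
  #|X| <= #|[set y in X :\: max_trace X h | h < y]| + #|[set y in X :\: max_trace X h | y < h]|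
          + #|max_trace X h|.
Proof.
move=> hX; set W := X :\: max_trace X h.
have cardW : #|W| <= #|[set y in W | h < y]| + #|[set y in W | y < h]|.
  apply: leq_trans (leq_card_setU _ _); apply/subset_leq_card/subsetP => y yW.
  have yh : y != h by apply: contraTneq yW => ->; rewrite inE max_trace_id.
  by rewrite !inE in yW *; rewrite yW /=; rewrite -(inj_eq val_inj) neq_ltn orbC in yh.
apply: leq_trans (leq_add cardW (leqnn _)).
by rewrite -(cardsID (max_trace X h) X) addnC leq_add2l subset_leq_card ?subsetIr.
Qed.

Lemma laminar_ramsey a b X : 5 ^ (a + b) <= #|X| -> exists2 Y : {set 'I_m}, Y \subset X &
  (traces_upsets [rel x y : 'I_m | x < y] F Y /\ a <= #|Y|) \/
  (traces_upsets [rel x y : 'I_m | y < x] F Y /\ b <= #|Y|).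
Proof.
have lt_asym (x y : 'I_m) : x < y -> ~~ (y < x) by rewrite -leqNgt => /ltnW.
have empty r : traces_upsets r F set0 by move=> D _; right; rewrite setI0 cards0.
elim: a b X => [|a IHa] b X.
  by move=> _; exists set0; [exact: sub0set | left].
elim: b X => [|b IHb] X cardX.
  by exists set0; [exact: sub0set | right].
have [x0 x0X] : exists x0, x0 \in X.
  by apply/set0Pn; rewrite -card_gt0 (leq_trans _ cardX) ?expn_gt0.
(* Removing a largest trace through h keeps about half of X, and no member of F containing h
   but not X meets the rest; so h extends any monotone subset of the rest above or below h. *)
have [h hX small] := exists_small_max_trace x0X.
pose Wr := [set y in X :\: max_trace X h | h < y].
pose Wl := [set y in X :\: max_trace X h | y < h].
have cardX_split : #|X| <= #|Wr| + #|Wl| + #|max_trace X h| := card_split_max_trace hX.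
have subX (P : pred 'I_m) : [set y in X :\: max_trace X h | P y] \subset X.
  by apply/subsetP => y; rewrite !inE => /andP[/andP[_ ->]].
have [bigWr | smallWr] := leqP (5 ^ (a + b.+1)) #|Wr|.
  have [Y YWr [[upY aY] | [downY bY]]] := IHa b.+1 Wr bigWr.
    have [Y' Y'X [upY' aY']] := traces_upsets_grow (k := a) lt_asym hX YWr upY aY.
    by exists Y'; last left.
  by exists Y; [exact: subset_trans YWr (subX _) | right].
have bigWl : 5 ^ (a.+1 + b) <= #|Wl|.
  move: cardX cardX_split smallWr; rewrite !addSn !addnS !expnS; lia.
have [Y YWl [[upY aY] | [downY bY]]] := IHb Wl bigWl.
  by exists Y; [exact: subset_trans YWl (subX _) | left].
have [Y' Y'X [downY' bY']] := traces_upsets_grow (k := b) (fun x y => @lt_asym y x) hX YWl downY bY.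
by exists Y'; last right.
Qed.

Lemma laminar_monotone_subset n X : 5 ^ (n + n) <= #|X| ->
  exists2 Y : {set 'I_m}, Y \subset X & monotone_traces F Y /\ n <= #|Y|.
Proof.
move=> cardX; have [Y YX [[upY nY] | [downY nY]]] := laminar_ramsey cardX.
  by exists Y => //; split => //; left.
by exists Y => //; split => //; right.
Qed.

End LaminarRamsey.

Lemma two_laminar_monotone_subset m n (F G : {set {set 'I_m}}) :
  laminar F -> laminar G -> 5 ^ (5 ^ (n + n) + 5 ^ (n + n)) <= m ->
  exists2 Y, monotone_traces F Y /\ monotone_traces G Y & n <= #|Y|.
Proof.
move=> lamF lamG big_m; have card_setT : 5 ^ (5 ^ (n + n) + 5 ^ (n + n)) <= #|[set: 'I_m]|.
  by rewrite cardsT card_ord.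
have [Y1 _ [monoF1 nnY1]] := laminar_monotone_subset lamF card_setT.
have [Y Y_Y1 [monoG nY]] := laminar_monotone_subset lamG nnY1.
by exists Y => //; split => //; apply: monotone_traces_sub monoF1.
Qed.

Section Walks.
Variables (V E : finType) (src dst : E -> V).
Local Notation joins := (joins src dst).
Local Notation is_walk := (is_walk src dst).
Implicit Types (e f : E) (x y : V) (s : seq (E * V)) (S : {set E}).

Lemma joinsC e x y : joins e x y = joins e y x.
Proof. by rewrite /Defs.joins orbC. Qed.

Lemma joins_endpoint e x y : joins e x y -> (x == src e) || (x == dst e).
Proof. by case/orP => /andP[] => [/eqP <- _ | _ /eqP <-]; rewrite eqxx ?orbT. Qed.

Lemma joins_endpoint_eq e x y a b : joins e x y -> joins e a b -> (x == a) || (x == b).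
Proof.
by move=> /joins_endpoint /orP[] /eqP -> /orP[] /andP[/eqP <- /eqP <-]; rewrite eqxx ?orbT.
Qed.

Lemma joins_mem e x y (A : {set V}) : src e \in A -> dst e \in A -> joins e x y -> y \in A.
Proof. by move=> sA dA; rewrite joinsC => /joins_endpoint /orP[] /eqP ->. Qed.

Lemma joins_src_dst e : joins e (src e) (dst e).
Proof. by rewrite /Defs.joins !eqxx. Qed.

Lemma walk_edge_joins x y s e : is_walk x y s -> e \in map fst s ->
  exists a b, [/\ a \in x :: map snd s, b \in map snd s & joins e a b].
Proof.
elim: s x => [|[f v] s IHs] x //= /andP[xv ws]; rewrite inE => /orP[/eqP -> | es].
  by exists x, v; rewrite !inE !eqxx.
have [a [b [aw bw eab]]] := IHs _ ws es.
by exists a, b; split=> //; rewrite in_cons ?aw ?bw orbT.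
Qed.

Lemma path_uniq_edges x y s : is_walk x y s -> uniq (x :: map snd s) -> uniq (map fst s).
Proof.
elim: s x => [|[e v] s IHs] x //= /andP[xv ws] /andP[x_notin uniq_s].
rewrite (IHs _ ws uniq_s) andbT; apply: contra x_notin => es.
have [a [b [aw bw eab]]] := walk_edge_joins ws es.
by case/orP: (joins_endpoint_eq xv eab) => /eqP ->; rewrite ?aw ?in_cons ?bw ?orbT.
Qed.

Lemma walk_split_at x y s e : is_walk x y s -> e \in map fst s ->
  exists s1 s2 u v, [/\ s = s1 ++ (e, v) :: s2, is_walk x u s1, joins e u v & is_walk v y s2].
Proof.
elim: s x => [|[f w] s IHs] x //= /andP[xw ws]; rewrite inE => /orP[/eqP -> | es].
  by exists [::], s, x, w; split; rewrite /= ?eqxx.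
have [s1 [s2 [u [v [-> w1 euv w2]]]]] := IHs _ ws es.
by exists ((f, w) :: s1), s2, u, v; rewrite /= xw w1.
Qed.

Lemma path_edge_in S x y s e : is_path_in src dst S x y s -> e \in map fst s -> e \in S.
Proof. by case/and3P => _ _ /allP sS /mapP[st sts ->]; apply: sS. Qed.

Lemma path_subset S1 S2 x y s : S1 \subset S2 ->
  is_path_in src dst S1 x y s -> is_path_in src dst S2 x y s.
Proof.
move=> sS12 /and3P[ws uniq_s /allP sS1]; apply/and3P; split=> //.
by apply/allP => st /sS1; apply: subsetP.
Qed.

Lemma all_edges_setD1 S e s : all (fun st => st.1 \in S) s -> e \notin map fst s ->
  all (fun st => st.1 \in S :\ e) s.
Proof.
move=> /allP sS es; apply/allP => st sts; rewrite !inE sS // andbT.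
by apply: contraNneq es => <-; apply: map_f.
Qed.

Variable VT : {set V}.
Local Notation linked S := (connect (sub_adj src dst VT S)).

Lemma sub_adj_sym S : symmetric (sub_adj src dst VT S).
Proof.
move=> x y; rewrite /sub_adj andbCA; congr (_ && (_ && _)).
by apply: eq_existsb => e; rewrite joinsC.
Qed.

Lemma linked_sym S : connect_sym (sub_adj src dst VT S).
Proof. exact/sym_connect_sym/sub_adj_sym. Qed.

Lemma linked_subset S1 S2 x y : S1 \subset S2 -> linked S1 x y -> linked S2 x y.
Proof.
move=> sS12; apply: connect_sub => u v /and3P[uV vV /existsP[e /andP[eS euv]]].
by apply: connect1; rewrite /sub_adj uV vV; apply/existsP; exists e; rewrite (subsetP sS12).
Qed.

Lemma linked_setD1 S f x y : linked S x y ->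
  [\/ linked (S :\ f) x y, linked (S :\ f) x (src f) | linked (S :\ f) x (dst f)].
Proof.
case/connectP => p + ->; elim: p x => [|v p IHp] x /=; first by constructor 1.
case/andP => /and3P[xV vV /existsP[e /andP[eS exv]]] /IHp.
have [ef _ | nef] := eqVneq e f.
  by rewrite ef in exv; case/orP: (joins_endpoint exv) => /eqP ->; [constructor 2 | constructor 3].
have xv : linked (S :\ f) x v.
  by apply: connect1; rewrite /sub_adj xV vV; apply/existsP; exists e; rewrite !inE nef eS.
by case=> h; [constructor 1 | constructor 2 | constructor 3]; apply: connect_trans xv h.
Qed.

Lemma sub_adj_path_walk S x p : path (sub_adj src dst VT S) x p ->
  exists s, [/\ is_walk x (last x p) s, map snd s = p & all (fun st => st.1 \in S) s].
Proof.
elim: p x => [|v p IHp] x /=; first by exists [::]; rewrite /= eqxx.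
case/andP => /and3P[_ _ /existsP[e /andP[eS exv]]] /IHp[s [ws ms all_s]].
by exists ((e, v) :: s); rewrite /= exv ws eS all_s ms.
Qed.

Lemma linked_path S x y : linked S x y -> exists s, is_path_in src dst S x y s.
Proof.
case/connectP => p + ->; case/shortenP => q path_q uniq_q _.
have [s [ws ms all_s]] := sub_adj_path_walk path_q.
by rewrite -ms in ws uniq_q *; exists s; rewrite /is_path_in ws uniq_q all_s.
Qed.

Lemma walk_linked S x y s : x \in VT ->
  (forall e, e \in S -> src e \in VT /\ dst e \in VT) ->
  is_walk x y s -> all (fun st => st.1 \in S) s -> linked S x y.
Proof.
move=> + endsS; elim: s x => [|[e v] s IHs] x xV /=; first by move=> /eqP ->.
case/andP => exv ws /andP[eS all_s].
have vV : v \in VT by have [sV dV] := endsS e eS; apply: joins_mem exv.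
apply: connect_trans (IHs _ vV ws all_s); apply: connect1.
by rewrite /sub_adj xV vV; apply/existsP; exists e; rewrite eS.
Qed.
End Walks.

Section TreeCuts.
Variables (V E : finType) (src dst : E -> V) (VT : {set V}) (ET : {set E}).
Hypothesis tree : is_tree src dst VT ET.
Local Notation linked S := (connect (sub_adj src dst VT S)).
Implicit Types (e f : E) (x y u v : V).

Lemma tree_edge_ends e : e \in ET -> src e \in VT /\ dst e \in VT.
Proof. by case: tree => _ ends _ _; apply: ends. Qed.

Lemma tree_path x y : x \in VT -> y \in VT -> exists s, is_path_in src dst ET x y s.
Proof. by case: tree => _ _ conn _ xV yV; apply/linked_path/conn. Qed.

Definition side e v := linked (ET :\ e) (src e) v.

Lemma side_linked e u v : linked (ET :\ e) u v -> side e u = side e v.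
Proof.
move=> uv; apply/idP/idP => [su | sv]; first exact: connect_trans su uv.
by apply: connect_trans sv _; rewrite linked_sym.
Qed.

Lemma tree_side_cases e v : e \in ET -> v \in VT -> side e v \/ linked (ET :\ e) (dst e) v.
Proof.
move=> eT vV; have [sV _] := tree_edge_ends eT; case: tree => _ _ conn _.
by case/(linked_setD1 e): (conn v (src e) vV sV) => h; [left | left | right];
  rewrite ?/side linked_sym.
Qed.

Lemma tree_side_dst e : e \in ET -> ~~ side e (dst e).
Proof.
move=> eT; apply/negP => sd; case: tree => _ _ _ /(_ e eT); apply.
have src_linked v : v \in VT -> linked (ET :\ e) (src e) v.
  by move=> vV; case: (tree_side_cases eT vV) => // h; apply: connect_trans sd h.
by move=> x y xV yV; apply: connect_trans (src_linked y yV); rewrite linked_sym src_linked.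
Qed.

Lemma linked_side e u v : e \in ET -> u \in VT -> v \in VT ->
  linked (ET :\ e) u v = (side e u == side e v).
Proof.
move=> eT uV vV; apply/idP/eqP => [/side_linked // | suv].
have [su | nsu] := boolP (side e u).
  have sv : side e v by rewrite -suv.
  by apply: connect_trans sv; rewrite linked_sym.
have dst_linked w : w \in VT -> ~~ side e w -> linked (ET :\ e) (dst e) w.
  by move=> wV; case: (tree_side_cases eT wV) => [->|].
apply: connect_trans (dst_linked v vV _); last by rewrite -suv.
by rewrite linked_sym dst_linked.
Qed.

Lemma tree_path_side e x y s : e \in ET -> x \in VT -> is_path_in src dst ET x y s ->
  e \in map fst s -> side e x != side e y.
Proof.
move=> eT xV /and3P[ws uniq_s sET] es.
have [s1 [s2 [u [v [def_s w1 euv w2]]]]] := walk_split_at ws es.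
move: (path_uniq_edges ws uniq_s) sET; rewrite def_s map_cat cat_uniq all_cat /=.
case/and3P => _ /norP[e_s1 _] /andP[e_s2 _] /and3P[s1ET _ s2ET].
have endsD f : f \in ET :\ e -> src f \in VT /\ dst f \in VT.
  by rewrite inE => /andP[_ /tree_edge_ends].
have vV : v \in VT by have [sV dV] := tree_edge_ends eT; apply: joins_mem euv.
rewrite (side_linked (walk_linked xV endsD w1 (all_edges_setD1 s1ET e_s1))).
rewrite -(side_linked (walk_linked vV endsD w2 (all_edges_setD1 s2ET e_s2))).
have ss : side e (src e) := connect0 _ _.
by case/orP: euv => /andP[/eqP <- /eqP <-]; rewrite ss (negbTE (tree_side_dst eT)).
Qed.

Variables (m : nat) (phi : 'I_m -> V) (r0 : 'I_m).
Hypothesis phiVT : forall i, phi i \in VT.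

Definition cut e : {set 'I_m} := [set i | side e (phi i) != side e (phi r0)].

Definition cut_family := [set cut e | e in ET].

Lemma cut_family_laminar : laminar cut_family.
Proof.
move=> _ _ /imsetP[e eT ->] /imsetP[f fT ->].
have [<- | nef] := eqVneq e f; first by rewrite subxx.
have fTe : f \in ET :\ e by rewrite !inE eq_sym nef.
have [sfV dfV] := tree_edge_ends fT.
have side_f : side e (src f) = side e (dst f).
  apply/side_linked/connect1; rewrite /sub_adj sfV dfV; apply/existsP; exists f.
  by rewrite fTe joins_src_dst.
have linked_off_f x y : linked (ET :\ e) x y ->
    linked (ET :\ f) x y \/ side e x = side e (src f).
  case/(linked_setD1 f) => h; [left | right | right].
  - by apply: linked_subset h; apply/subsetP => g; rewrite !inE => /and3P[-> _ ->].
  - exact/side_linked/(linked_subset (subsetDl _ _) h).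
  - by rewrite side_f; apply/side_linked/(linked_subset (subsetDl _ _) h).
have [sfr | sfr] := eqVneq (side e (src f)) (side e (phi r0)).
  have same_side_f i j : i \in cut e -> j \in cut e -> side f (phi i) = side f (phi j).
    rewrite !inE => ie je.
    have : linked (ET :\ e) (phi i) (phi j).
      rewrite linked_side ?phiVT //; move: ie je.
      by case: (side e (phi i)); case: (side e (phi j)); case: (side e (phi r0)).
    by case/linked_off_f => [/side_linked // | h]; rewrite h sfr eqxx in ie.
  have [dis | /set0Pn[i /setIP[ie ifc]]] := eqVneq (cut e :&: cut f) set0.
    by rewrite -setI_eq0 dis eqxx !orbT.
  apply/orP; left; apply/subsetP => j je.
  by rewrite inE -(same_side_f i j ie je); rewrite inE in ifc.
apply/or3P; constructor 2; apply/subsetP => j; apply: contraTT; rewrite !inE !negbK => /eqP sj.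
have : linked (ET :\ e) (phi j) (phi r0) by rewrite linked_side ?phiVT ?sj.
case/linked_off_f => [/side_linked -> // | h].
by move: sfr; rewrite -h sj eqxx.
Qed.

Lemma tree_path_cut e i j s : is_path_in src dst ET (phi i) (phi j) s ->
  e \in map fst s -> (i \in cut e) != (j \in cut e).
Proof.
move=> path_s es; have := tree_path_side (path_edge_in path_s es) (phiVT i) path_s es.
by rewrite !inE; case: (side e (phi i)); case: (side e (phi j)); case: (side e (phi r0)).
Qed.
End TreeCuts.

Section CycleArcs.
Variables (V E : finType) (src dst : E -> V).
Variables (m p : nat) (phi : 'I_m -> V) (EC : {set E}) (e0 : E).
Hypothesis m_gt2 : 2 < m.
Hypothesis copy : is_Ctr_copy src dst p phi EC.
Local Notation joins := (joins src dst).

Let m_gt0 : 0 < m. Proof. exact: ltn_trans m_gt2. Qed.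

Definition cyc_ord t : 'I_m := Ordinal (ltn_pmod t m_gt0).

Definition cycle_edges i := [set e in EC | joins e (phi i) (phi (ordS i))].

Definition parallel_edge i k := nth e0 (enum (cycle_edges i)) k.

Definition arc s L k := [seq (parallel_edge (cyc_ord t) k, phi (cyc_ord t.+1)) | t <- iota s L].

Lemma ordS_cyc_ord t : ordS (cyc_ord t) = cyc_ord t.+1.
Proof. by apply: val_inj; rewrite /= -addn1 modnDml addn1. Qed.

Lemma cyc_ord_id (i : 'I_m) : cyc_ord i = i.
Proof. by apply: val_inj; rewrite /= modn_small. Qed.

Lemma parallel_edgeP i k : k < p ->
  parallel_edge i k \in EC /\ joins (parallel_edge i k) (phi i) (phi (ordS i)).
Proof.
case: copy => _ _ /(_ i) card_i kp.
have : parallel_edge i k \in cycle_edges i by rewrite -mem_enum mem_nth // -cardE card_i.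
by rewrite inE => /andP[].
Qed.

Lemma ordS_ordS_neq (i : 'I_m) : ordS (ordS i) != i.
Proof.
apply/eqP => /(congr1 val); rewrite !val_ordS; have := ltn_ord i.
case: (ltnP i.+1 m) => h1 /=; first case: (ltnP i.+2 m) => h2; try lia.
by rewrite (ltn_trans (ltnSn 1) m_gt2); lia.
Qed.

Lemma parallel_edge_inj i i' k k' : k < p -> k' < p ->
  parallel_edge i k = parallel_edge i' k' -> i = i' /\ k = k'.
Proof.
case: copy => phi_inj _ card_ kp kp' eq_e.
have [_ e_i] := parallel_edgeP i kp; have [_ e_i'] := parallel_edgeP i' kp'.
have ii' : i = i'.
  move: e_i e_i'; rewrite eq_e /Defs.joins.
  case/orP => /andP[/eqP a1 /eqP b1] /orP[] /andP[/eqP a2 /eqP b2].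
  - by apply: phi_inj; rewrite -a1 -a2.
  - have h1 : i = ordS i' by apply: phi_inj; rewrite -a1 -a2.
    have h2 : ordS i = i' by apply: phi_inj; rewrite -b1 -b2.
    by have := ordS_ordS_neq i'; rewrite -h1 h2 eqxx.
  - have h1 : ordS i = i' by apply: phi_inj; rewrite -a1 -a2.
    have h2 : i = ordS i' by apply: phi_inj; rewrite -b1 -b2.
    by have := ordS_ordS_neq i'; rewrite -h2 h1 eqxx.
  - by apply: ordS_inj; apply: phi_inj; rewrite -a1 -a2.
split=> //; subst i'; move/eqP: eq_e.
by rewrite nth_uniq ?enum_uniq -?cardE ?card_ // => /eqP.
Qed.

Lemma arc_walk s L k : k < p ->
  is_walk src dst (phi (cyc_ord s)) (phi (cyc_ord (s + L))) (arc s L k).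
Proof.
move=> kp; elim: L s => [|L IHL] s /=; first by rewrite addn0.
have [_] := parallel_edgeP (cyc_ord s) kp; rewrite ordS_cyc_ord => ->.
by rewrite addnS -addSn IHL.
Qed.

Lemma arc_in_EC s L k : k < p -> all (fun st => st.1 \in EC) (arc s L k).
Proof. by move=> kp; apply/allP => _ /mapP[t _ ->]; case: (parallel_edgeP (cyc_ord t) kp). Qed.

Lemma arc_uniq s L k : L < m -> uniq (phi (cyc_ord s) :: map snd (arc s L k)).
Proof.
move=> Lm.
have -> : phi (cyc_ord s) :: map snd (arc s L k) = [seq phi (cyc_ord t) | t <- iota s L.+1].
  by rewrite /arc -map_comp /= -add1n iotaDl -map_comp.
rewrite map_inj_in_uniq ?iota_uniq // => t t'; rewrite !mem_iota => ht ht'.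
case: copy => phi_inj _ _ /phi_inj /(congr1 val) /= tt'.
by apply: (eq_modn_window (s := s) Lm _ _ tt'); lia.
Qed.

Lemma mem_arc_edges s L k e : e \in map fst (arc s L k) ->
  exists2 t, s <= t < s + L & e = parallel_edge (cyc_ord t) k.
Proof. by rewrite /arc -map_comp => /mapP[t]; rewrite mem_iota => ht ->; exists t. Qed.

Section ParallelLinkage.
Variables (n : nat) (w : 'I_n -> 'I_m) (S : {set E}) (T : 'I_n -> seq (E * V)).
Hypothesis n_gt1 : 1 < n.
Hypothesis w_incr : forall j j' : 'I_n, j < j' -> w j < w j'.
Hypothesis EC_S : EC \subset S.
Hypothesis T_path : forall j, is_path_in src dst S (phi (w j)) (phi (w (ordS j))) (T j).
Hypothesis T_off_EC : forall j e, e \in map fst (T j) -> e \notin EC.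
Hypothesis T_disjoint :
  forall j j', j != j' -> forall e, e \in map fst (T j) -> e \notin map fst (T j').

Lemma w_nondecr (j j' : 'I_n) : j <= j' -> w j <= w j'.
Proof. by rewrite leq_eqVlt => /orP[/eqP/val_inj -> // | /w_incr/ltnW]. Qed.

(* The summand m avoids truncated subtraction for the gap that wraps around the cycle. *)
Definition gap (j : 'I_n) := (w (ordS j) + m - w j) %% m.

Definition in_gap (j : 'I_n) r :=
  if j.+1 < n then (w j <= r) && (r < w (ordS j)) else (w j <= r) || (r < w (ordS j)).

Lemma cyc_ord_gap j : cyc_ord (w j + gap j) = w (ordS j).
Proof.
apply: val_inj; rewrite /= /gap modnDmr.
have -> : w j + (w (ordS j) + m - w j) = w (ordS j) + m by have := ltn_ord (w j); lia.
by rewrite modnDr modn_small.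
Qed.

Lemma gap_lt j : gap j < m.
Proof. exact: ltn_pmod. Qed.

Lemma in_gap_window j t : w j <= t < w j + gap j -> in_gap j (t %% m).
Proof.
rewrite /in_gap /gap; have := val_ordS j; have := ltn_ord (w j); have := ltn_ord (w (ordS j)).
case: ifP => [lt_jn | ge_jn] wSm wjm wS.
  have : w j < w (ordS j) by apply: w_incr; rewrite wS.
  move=> lt_w; have -> : w (ordS j) + m - w j = m + (w (ordS j) - w j) by lia.
  rewrite modnDl modn_small; last lia.
  by move=> ht; rewrite modn_small; lia.
have : w (ordS j) < w j by apply: w_incr; rewrite wS; move/negbT: ge_jn; lia.
move=> lt_w; rewrite modn_small; last by lia.
case: (ltnP t m) => [tm | mt] ht; first by rewrite modn_small //; lia.
by rewrite -(subnKC mt) modnDl modn_small; lia.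
Qed.

Lemma in_gap_disjoint j j' r : j != j' -> in_gap j r -> in_gap j' r -> False.
Proof.
wlog lt_jj' : j j' / j < j'.
  move=> W; case: (ltngtP j j') => [h | h | /val_inj ->]; [exact: W | | by rewrite eqxx].
  by move=> ne a b; apply: (W j' j) => //; rewrite eq_sym.
move=> _; rewrite /in_gap.
have lt_jn : j.+1 < n by have := ltn_ord j'; lia.
have wS : w (ordS j) <= w j' by apply: w_nondecr; rewrite val_ordS lt_jn.
rewrite lt_jn => /andP[wj_r r_wS]; case: ifP => [_ /andP[] | lt_j'n]; first lia.
have : w (ordS j') <= w j by apply: w_nondecr; rewrite val_ordS lt_j'n.
by move=> wS'; case/orP; lia.
Qed.

Lemma immerses_Ctr_parallel_linkage : immerses_Ctr src dst p.+1 n S.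
Proof.
pose P (h : 'I_n * 'I_p.+1) := if h.2 < p then arc (w h.1) (gap h.1) h.2 else T h.1.
exists (fun j => phi (w j)), P; split.
- move=> j j'; case: copy => phi_inj _ _ /phi_inj wjj'; apply/val_inj/eqP.
  by case: (ltngtP j j') => // /w_incr; rewrite wjj' ltnn.
- case=> j k; rewrite /P /=; case: ifP => kp; last exact: T_path.
  apply/and3P; split.
  + by have := arc_walk (w j) (gap j) kp; rewrite cyc_ord_gap cyc_ord_id.
  + by have := arc_uniq (w j) k (gap_lt j); rewrite cyc_ord_id.
  + by apply/allP => st /(allP (arc_in_EC _ _ kp)); apply: subsetP.
- case=> j k [j' k'] ne e; rewrite /P /=.
  case: ifP => kp; case: ifP => kp'.
  + move=> /mem_arc_edges[t ht ->]; apply/negP => /mem_arc_edges[t' ht' eq_e].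
    have [eq_t eq_k] := parallel_edge_inj kp kp' eq_e.
    have jj' : j != j' by apply: contraNneq ne => jj'; rewrite jj' (val_inj eq_k).
    apply: (in_gap_disjoint jj' (in_gap_window ht)).
    by have := in_gap_window ht'; rewrite -[t' %% m]/(val (cyc_ord t')) -eq_t.
  + move=> /mapP[st sts ->]; apply/negP => /T_off_EC.
    by rewrite (allP (arc_in_EC _ _ kp) _ sts).
  + move=> /T_off_EC /negbTE e_EC; apply/negP => /mapP[st sts est].
    by have := allP (arc_in_EC _ _ kp') _ sts; rewrite -est e_EC.
  + have kk' : k = k'.
      apply: ord_inj; move/negbT: kp; move/negbT: kp'.
      by have := ltn_ord k; have := ltn_ord k'; lia.
    by apply: T_disjoint; apply: contraNneq ne => ->; rewrite kk'.
Qed.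

End ParallelLinkage.

End CycleArcs.

Section AlternatingLinkage.
Variables (V E : finType) (src dst : E -> V) (m : nat) (phi : 'I_m -> V) (r0 : 'I_m).

Lemma tree_paths_disjoint VT ET (Y : {set 'I_m}) x y z u s1 s2 :
  is_tree src dst VT ET -> (forall i, phi i \in VT) ->
  monotone_traces (cut_family src dst VT ET phi r0) Y ->
  x \in Y -> y \in Y -> z \in Y -> u \in Y -> x < y -> y < z -> z < u ->
  is_path_in src dst ET (phi x) (phi y) s1 -> is_path_in src dst ET (phi z) (phi u) s2 ->
  forall e, e \in map fst s1 -> e \notin map fst s2.
Proof.
move=> tree phiVT monoY xY yY zY uY xy yz zu path1 path2 e e1; apply/negP => e2.
have cutF : cut src dst VT ET phi r0 e \in cut_family src dst VT ET phi r0.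
  exact/imset_f/(path_edge_in path1 e1).
exact: (monotone_traces_cut monoY cutF xY yY zY uY xy yz zu
  (tree_path_cut tree r0 phiVT path1 e1) (tree_path_cut tree r0 phiVT path2 e2)).
Qed.

Variables (VTa VTb : {set V}) (ETa ETb ETc : {set E}).
Hypotheses (tree_a : is_tree src dst VTa ETa) (tree_b : is_tree src dst VTb ETb).
Hypotheses (dis_ab : [disjoint ETa & ETb]) (dis_ac : [disjoint ETa & ETc]).
Hypothesis dis_bc : [disjoint ETb & ETc].
Hypotheses (phi_a : forall i, phi i \in VTa) (phi_b : forall i, phi i \in VTb).
Variables (Y : {set 'I_m}) (n : nat) (w : 'I_n -> 'I_m).
Hypothesis mono_a : monotone_traces (cut_family src dst VTa ETa phi r0) Y.
Hypothesis mono_b : monotone_traces (cut_family src dst VTb ETb phi r0) Y.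
Hypothesis wY : forall j, w j \in Y.
Hypothesis w_incr : forall j j' : 'I_n, j < j' -> w j < w j'.

Definition linkage_tree (j : 'I_n) := if j.+1 == n then ETc else if odd j then ETb else ETa.

Lemma linkage_tree_cases j :
  [\/ linkage_tree j = ETa, linkage_tree j = ETb | linkage_tree j = ETc].
Proof. by rewrite /linkage_tree; case: ifP => _; [|case: ifP => _]; constructor. Qed.

Lemma alternating_paths_disjoint (T : 'I_n -> seq (E * V)) :
  (forall j, is_path_in src dst (linkage_tree j) (phi (w j)) (phi (w (ordS j))) (T j)) ->
  forall (j j' : 'I_n) e, j < j' -> e \in map fst (T j) -> e \in map fst (T j') -> False.
Proof.
move=> T_path j j' e lt_jj' ej ej'.
have lt_jn : j.+1 < n by have := ltn_ord j'; lia.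
have eTj := path_edge_in (T_path j) ej; have eTj' := path_edge_in (T_path j') ej'.
have [last_j' | not_last_j'] := eqVneq j'.+1 n.
  move: eTj eTj'; rewrite /linkage_tree last_j' eqxx (ltn_eqF lt_jn).
  by case: (odd j) => eT; [rewrite (disjointFr dis_bc eT) | rewrite (disjointFr dis_ac eT)].
have lt_j'n : j'.+1 < n by rewrite ltn_neqAle not_last_j' ltn_ord.
have [par | npar] := eqVneq (odd j) (odd j'); last first.
  move: npar eTj eTj'; rewrite /linkage_tree (ltn_eqF lt_jn) (ltn_eqF lt_j'n).
  by case: (odd j); case: (odd j') => //= _ eT;
    rewrite ?(disjointFl dis_ab eT) ?(disjointFr dis_ab eT).
have incr (i : 'I_n) : i.+1 < n -> w i < w (ordS i).
  by move=> lt_in; apply: w_incr; rewrite val_ordS lt_in.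
have gap_jj' : w (ordS j) < w j'.
  apply: w_incr; rewrite val_ordS lt_jn ltn_neqAle lt_jj' andbT.
  by apply/eqP => jj'; move: par; rewrite -jj' /=; case: (odd j).
have := T_path j; have := T_path j'; rewrite /linkage_tree (ltn_eqF lt_jn) (ltn_eqF lt_j'n) -par.
case: (odd j) => path' path.
- exact: negP (tree_paths_disjoint tree_b phi_b mono_b (wY _) (wY _) (wY _) (wY _)
    (incr _ lt_jn) gap_jj' (incr _ lt_j'n) path path' ej) ej'.
- exact: negP (tree_paths_disjoint tree_a phi_a mono_a (wY _) (wY _) (wY _) (wY _)
    (incr _ lt_jn) gap_jj' (incr _ lt_j'n) path path' ej) ej'.
Qed.

Lemma alternating_linkage VTc : is_tree src dst VTc ETc -> (forall i, phi i \in VTc) ->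
  exists2 T : 'I_n -> seq (E * V),
    forall j, is_path_in src dst (linkage_tree j) (phi (w j)) (phi (w (ordS j))) (T j) &
    forall j j', j != j' -> forall e, e \in map fst (T j) -> e \notin map fst (T j').
Proof.
move=> tree_c phi_c.
have path_exists j : exists s,
    is_path_in src dst (linkage_tree j) (phi (w j)) (phi (w (ordS j))) s.
  case: (linkage_tree_cases j) => ->.
  - exact: (tree_path tree_a (phi_a (w j)) (phi_a (w (ordS j)))).
  - exact: (tree_path tree_b (phi_b (w j)) (phi_b (w (ordS j)))).
  - exact: (tree_path tree_c (phi_c (w j)) (phi_c (w (ordS j)))).
have [T T_path] := fin_all_exists path_exists.
exists T => // j j' ne e ej; apply/negP => ej'.
case: (ltngtP j j') => [lt_jj' | lt_j'j | /val_inj eq_jj'].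
- exact: alternating_paths_disjoint T_path _ _ _ lt_jj' ej ej'.
- exact: alternating_paths_disjoint T_path _ _ _ lt_j'j ej' ej.
- by rewrite eq_jj' eqxx in ne.
Qed.

End AlternatingLinkage.

Lemma increasing_enumeration m n (Y : {set 'I_m}) : n <= #|Y| ->
  exists2 w : 'I_n -> 'I_m, (forall j, w j \in Y) & (forall j j' : 'I_n, j < j' -> w j < w j').
Proof.
move=> nY; have n_le_m : n <= m.
  by apply: leq_trans nY _; apply: leq_trans (max_card _) _; rewrite card_ord.
have size_Y : n <= size (enum Y) by rewrite -cardE.
have lt_size (j : 'I_n) : j < size (enum Y) by apply: leq_trans (ltn_ord j) size_Y.
pose w (j : 'I_n) := nth (widen_ord n_le_m j) (enum Y) j.
exists w => [j | j j' lt_jj']; first by rewrite -mem_enum mem_nth.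
have sorted_Y : sorted ltn (map val (enum Y)).
  rewrite -[enum Y](eq_filter (mem_enum _)) -(eq_filter (mem_map val_inj _)) -filter_map.
  by rewrite (sorted_filter ltn_trans) // unlock val_ord_enum iota_ltn_sorted.
set x0 := widen_ord n_le_m j; rewrite /w (set_nth_default x0 _ (lt_size j')).
rewrite -!(nth_map x0 (val x0) val) ?lt_size //.
by apply: (sorted_ltn_nth ltn_trans (val x0) sorted_Y); rewrite // inE size_map lt_size.
Qed.

Unset Implicit Arguments.
Theorem lemma8p6 :
  forall n : nat, 3 <= n ->
  exists m : nat, 3 <= m /\
  forall (V E : finType) (src dst : E -> V), loopless src dst ->
  forall p : nat, 0 < p ->
  forall (phi : 'I_m -> V) (EC : {set E}),
    is_Ctr_copy src dst p phi EC ->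
  forall (VTa VTb VTc : {set V}) (ETa ETb ETc : {set E}),
    is_tree src dst VTa ETa -> is_tree src dst VTb ETb -> is_tree src dst VTc ETc ->
    [disjoint ETa & ETb] -> [disjoint ETa & ETc] -> [disjoint ETb & ETc] ->
    [disjoint ETa & EC] -> [disjoint ETb & EC] -> [disjoint ETc & EC] ->
    (forall i : 'I_m, [/\ phi i \in VTa, phi i \in VTb & phi i \in VTc]) ->
    immerses_Ctr src dst p.+1 n (EC :|: ETa :|: ETb :|: ETc).
Proof.
move=> n n_ge3; pose m := 5 ^ (5 ^ (n + n) + 5 ^ (n + n)).
have m_gt2 : 2 < m.
  have K_gt0 : 0 < 5 ^ (n + n) by rewrite expn_gt0.
  by rewrite (@leq_trans (5 ^ 2)) // leq_pexp2l //; lia.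
exists m; split=> //.
move=> V E src dst _ p p_gt0 phi EC copy VTa VTb VTc ETa ETb ETc
  tree_a tree_b tree_c dis_ab dis_ac dis_bc dis_aC dis_bC dis_cC phiT.
have phi_a i : phi i \in VTa by case: (phiT i).
have phi_b i : phi i \in VTb by case: (phiT i).
have phi_c i : phi i \in VTc by case: (phiT i).
pose r0 : 'I_m := Ordinal (ltn_trans (isT : 0 < 2) m_gt2).
have [e0 _] : exists e0, e0 \in [set e in EC | joins src dst e (phi r0) (phi (ordS r0))].
  by apply/card_gt0P; case: copy => _ _ ->.
have [Y [mono_a mono_b] n_Y] := two_laminar_monotone_subset
  (cut_family_laminar tree_a (r0 := r0) phi_a) (cut_family_laminar tree_b (r0 := r0) phi_b)
  (leqnn m).
have [w wY w_incr] := increasing_enumeration n_Y.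
have [T T_path T_disjoint] := alternating_linkage tree_a tree_b dis_ab dis_ac dis_bc
  phi_a phi_b mono_a mono_b wY w_incr tree_c phi_c.
apply: (immerses_Ctr_parallel_linkage e0 m_gt2 copy _ w_incr _ _ _ T_disjoint).
- lia.
- by apply/subsetP => e eEC; rewrite !inE eEC.
- move=> j; apply: path_subset (T_path j); apply/subsetP => e.
  by case: (linkage_tree_cases ETa ETb ETc j) => -> eT; rewrite !inE eT ?orbT.
- move=> j e /(path_edge_in (T_path j)).
  by case: (linkage_tree_cases ETa ETb ETc j) => -> eT; rewrite ?(disjointFr dis_aC eT)
    ?(disjointFr dis_bC eT) ?(disjointFr dis_cC eT).
Qed.
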